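(* Let $\eta\in(0,1)$ and, for $N_S>0$ and $\xi\in[0,1]$, let $$I(\xi;N_S)=4N_S\left\{\frac{1-\xi}{1-2\eta^2\left(\sqrt{\xi N_S(1+\xi N_S)}-\xi N_S\right)}+\frac{\xi\left[(1-\eta^2)^2+\eta^4\right]}{(1-\eta^2)\left(1+2\xi N_S\eta^2(1-\eta^2)\right)}\right\}.$$ Let $f_1(\eta,N_S)=\frac{1}{4N_S}\,\partial_\xi I(\xi;N_S)\big|_{\xi=1}$. If $\eta>1/\sqrt2$, then $N_S\mapsto f_1(\eta,N_S)$ has exactly one zero $\bar N_S^{(0)}(\eta)$ on $(0,\infty)$. Define $\bar N_S(\eta)=0$ if $\eta\le 1/\sqrt2$ and $\bar N_S(\eta)=\bar N_S^{(0)}(\eta)$ if $\eta>1/\sqrt2$. Then, for every $N_S>0$, $\xi=1$ is a maximizer of $\xi\mapsto I(\xi;N_S)$ over $[0,1]$ if and only if $N_S\le\bar N_S(\eta)$.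
   Context: $I(\xi;N_S)$ is the quantum Fisher information for estimating the transmission $\eta$ of a pure-loss (zero-temperature, $N_B=0$) bosonic channel $a\mapsto\eta a+\sqrt{1-\eta^2}\,v$ ($v$ vacuum), using a single-mode pure displaced squeezed state with total mean photon number $N_S$, of which $\xi N_S$ photons are in squeezing and $(1-\xi)N_S$ in displacement (displacement along the optimal angle). $\xi=1$ is the squeezed-vacuum state, $\xi=0$ the coherent state. *)

From Stdlib Require Import Reals.
From Coquelicot Require Import Coquelicot.
Open Scope R_scope.

Definition QFI (eta NS xi : R) : R :=
  4 * NS *
  ( (1 - xi) / (1 - 2 * eta ^ 2 * (sqrt (xi * NS * (1 + xi * NS)) - xi * NS))
  + xi * ((1 - eta ^ 2) ^ 2 + eta ^ 4)
      / ((1 - eta ^ 2) * (1 + 2 * xi * NS * eta ^ 2 * (1 - eta ^ 2))) ).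

Definition f1 (eta NS : R) : R :=
  / (4 * NS) * Derive (fun xi => QFI eta NS xi) 1.

Definition one_is_maximizer (eta NS : R) : Prop :=
  forall xi, 0 <= xi <= 1 -> QFI eta NS xi <= QFI eta NS 1.

(* Nb is the threshold \bar N_S(eta): 0 if eta <= 1/sqrt 2, else a
   zero of N |-> f1 eta N on (0, oo) (unique by the first conjunct of the theorem). *)
Definition Nbar_spec (eta Nb : R) : Prop :=
  (eta <= / sqrt 2 /\ Nb = 0) \/
  (/ sqrt 2 < eta /\ 0 < Nb /\ f1 eta Nb = 0).

(** With [x = xi N] squeezed photons, [I(xi) = 4 N ((1 - xi) / D(x) + xi c / (1 + k x))]
    where [D(x) = 1 - 2 eta^2 (sqrt (x (1 + x)) - x)] is nonincreasing with values in
    [(0, 1]], and [c, k > 0] depend on [eta] only. The slope at [xi = 1] is [4 N F(N)] with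
    [F(N) = c / (1 + k N)^2 - 1 / D(N)], which is strictly decreasing, continuous, negative
    for large [N], and [F(0) = c - 1] is positive exactly when [eta > 1/sqrt 2]. This gives
    the unique zero of [f1 = F], and reduces the threshold statement to: [xi = 1] is a
    maximizer iff [F(N) >= 0]. Necessity is the sign of the derivative at the right endpoint
    of [[0, 1]]. Conversely, with [u = 1 + k N], [F(N) >= 0] bounds [1 / D(x) <= 1 / D(N)]
    by [c / u^2], and [(1 - xi) / u^2 + xi / (1 - xi + xi u) <= 1 / u] yields [I(xi) <= I(1)]. *)

From Stdlib Require Import Reals Lra Psatz.
From Coquelicot Require Import Coquelicot.
Open Scope R_scope.

Definition sq_rate (eta : R) : R := 2 * eta ^ 2 * (1 - eta ^ 2).

Definition sq_coef (eta : R) : R := ((1 - eta ^ 2) ^ 2 + eta ^ 4) / (1 - eta ^ 2).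

Definition disp_denom (eta x : R) : R := 1 - 2 * eta ^ 2 * (sqrt (x * (1 + x)) - x).

Definition f1_closed (eta N : R) : R :=
  sq_coef eta / (1 + sq_rate eta * N) ^ 2 - / disp_denom eta N.

Lemma sq_rate_pos (eta : R) : 0 < eta < 1 -> 0 < sq_rate eta.
Proof.
  intros Heta. unfold sq_rate.
  apply Rmult_lt_0_compat; [apply Rmult_lt_0_compat|]; nra.
Qed.

Lemma sqrt_x1x_bounds (x : R) : 0 <= x -> x <= sqrt (x * (1 + x)) < x + / 2.
Proof.
  intros Hx. split.
  - rewrite <- (sqrt_pow2 x Hx) at 1. apply sqrt_le_1_alt. nra.
  - rewrite <- (sqrt_pow2 (x + / 2)) by lra. apply sqrt_lt_1_alt. nra.
Qed.

Lemma sqrt_x1x_sub_incr (x y : R) :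
  0 <= x <= y -> sqrt (x * (1 + x)) - x <= sqrt (y * (1 + y)) - y.
Proof.
  intros Hxy. destruct (sqrt_x1x_bounds x) as [Hlo Hhi]; [lra|].
  assert (Hsq : sqrt (x * (1 + x)) ^ 2 = x * (1 + x)).
  { rewrite <- Rsqr_pow2. apply Rsqr_sqrt. nra. }
  set (s := sqrt (x * (1 + x))) in *.
  (* [(s + (y - x))^2 = x (1 + x) + 2 s (y - x) + (y - x)^2 <= y (1 + y)] as [s < x + 1/2]. *)
  assert (s + (y - x) <= sqrt (y * (1 + y))).
  { rewrite <- (sqrt_pow2 (s + (y - x))) by lra. apply sqrt_le_1_alt. nra. }
  lra.
Qed.

Lemma disp_denom_bounds (eta x : R) :
  0 < eta < 1 -> 0 <= x -> 0 < disp_denom eta x <= 1.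
Proof.
  intros Heta Hx. destruct (sqrt_x1x_bounds x Hx). unfold disp_denom. split; nra.
Qed.

Lemma disp_denom_decr (eta x y : R) :
  0 < eta < 1 -> 0 <= x <= y -> disp_denom eta y <= disp_denom eta x.
Proof.
  intros Heta Hxy. pose proof (sqrt_x1x_sub_incr x y Hxy). unfold disp_denom. nra.
Qed.

Lemma disp_denom_continuous (eta x : R) : continuous (disp_denom eta) x.
Proof.
  unfold disp_denom.
  apply (continuous_minus (fun _ => 1)); [apply continuous_const|].
  apply (continuous_mult (fun _ => 2 * eta ^ 2)); [apply continuous_const|].
  apply (continuous_minus (fun t => sqrt (t * (1 + t)))); [|apply continuous_id].
  apply continuous_sqrt_comp, (ex_derive_continuous (fun t => t * (1 + t))).
  auto_derive. easy.
Qed.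

Lemma QFI_eq (eta N xi : R) :
  QFI eta N xi =
  4 * N * ((1 - xi) / disp_denom eta (xi * N)
           + xi * sq_coef eta / (1 + sq_rate eta * (xi * N))).
Proof.
  unfold QFI, disp_denom, sq_coef, sq_rate, Rdiv.
  replace (1 + 2 * xi * N * eta ^ 2 * (1 - eta ^ 2))
    with (1 + 2 * eta ^ 2 * (1 - eta ^ 2) * (xi * N)) by ring.
  rewrite Rinv_mult. ring.
Qed.

Lemma is_derive_QFI_1 (eta N : R) :
  0 < eta < 1 -> 0 < N -> is_derive (QFI eta N) 1 (4 * N * f1_closed eta N).
Proof.
  intros Heta HN.
  assert (Hk : 0 < sq_rate eta * N) by (apply Rmult_lt_0_compat; [apply sq_rate_pos|]; lra).
  destruct (disp_denom_bounds eta N Heta (Rlt_le _ _ HN)) as [HD _].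
  eapply is_derive_ext; [intros xi; symmetry; apply QFI_eq|].
  unfold disp_denom in *. auto_derive.
  - rewrite !Rmult_1_l. repeat split; nra.
  - (* the factor [1 - xi] vanishes at [xi = 1], so the derivative of [disp_denom] drops out *)
    replace (1 + - (1)) with 0 by ring. rewrite Rmult_0_l, !Rmult_1_l.
    unfold f1_closed, disp_denom. field. split; nra.
Qed.

Lemma f1_eq (eta N : R) : 0 < eta < 1 -> 0 < N -> f1 eta N = f1_closed eta N.
Proof.
  intros Heta HN. unfold f1.
  erewrite is_derive_unique by exact (is_derive_QFI_1 eta N Heta HN). field. lra.
Qed.

Lemma sq_coef_pos (eta : R) : 0 < eta < 1 -> 0 < sq_coef eta.
Proof.
  intros Heta. unfold sq_coef, Rdiv.
  apply Rmult_lt_0_compat; [nra | apply Rinv_0_lt_compat; nra].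
Qed.

Lemma inv_sqrt2_lt_iff (x : R) : 0 <= x -> (/ sqrt 2 < x <-> / 2 < x ^ 2).
Proof.
  intros Hx. rewrite <- sqrt_inv, <- (sqrt_pow2 x Hx) at 1. split.
  - apply sqrt_lt_0_alt.
  - intros H. apply sqrt_lt_1_alt. split; [lra | assumption].
Qed.

Lemma sq_coef_gt1_iff (eta : R) : 0 < eta < 1 -> (1 < sq_coef eta <-> / sqrt 2 < eta).
Proof.
  intros Heta. rewrite inv_sqrt2_lt_iff by lra.
  assert (E : sq_coef eta * (1 - eta ^ 2) = (1 - eta ^ 2) ^ 2 + eta ^ 4).
  { unfold sq_coef. field. nra. }
  assert (0 < 1 - eta ^ 2) by nra.
  split; intros Hlt; nra.
Qed.

Lemma f1_closed_0 (eta : R) : f1_closed eta 0 = sq_coef eta - 1.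
Proof.
  unfold f1_closed, disp_denom.
  replace (0 * (1 + 0)) with 0 by ring. rewrite sqrt_0. field.
Qed.

Lemma f1_closed_decr (eta : R) :
  0 < eta < 1 -> forall a b, 0 <= a < b -> f1_closed eta b < f1_closed eta a.
Proof.
  intros Heta a b Hab. pose proof (sq_rate_pos eta Heta) as Hk.
  pose proof (sq_coef_pos eta Heta) as HA.
  destruct (disp_denom_bounds eta b Heta ltac:(lra)) as [HDb _].
  pose proof (disp_denom_decr eta a b Heta ltac:(lra)) as HDab.
  assert (Hinv : / disp_denom eta a <= / disp_denom eta b)
    by (apply Rinv_le_contravar; lra).
  assert (Hpow : / (1 + sq_rate eta * b) ^ 2 < / (1 + sq_rate eta * a) ^ 2).
  { assert (0 <= sq_rate eta * a) by nra.
    assert (sq_rate eta * a < sq_rate eta * b) by nra.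
    apply Rinv_lt_contravar; [apply Rmult_lt_0_compat|]; nra. }
  unfold f1_closed, Rdiv.
  pose proof (Rmult_lt_compat_l _ _ _ HA Hpow). lra.
Qed.

Lemma f1_closed_continuous (eta N : R) :
  0 < eta < 1 -> 0 <= N -> continuous (f1_closed eta) N.
Proof.
  intros Heta HN. pose proof (sq_rate_pos eta Heta).
  destruct (disp_denom_bounds eta N Heta HN) as [HD _].
  apply (continuous_minus (fun t => sq_coef eta / (1 + sq_rate eta * t) ^ 2)).
  - apply ex_derive_continuous. auto_derive. nra.
  - apply continuous_Rinv_comp; [apply disp_denom_continuous | lra].
Qed.

(* The point is chosen so that [1 + sq_rate N = 1 + sq_coef], making the first term of
   [f1_closed] smaller than [1 <= / disp_denom]. *)
Lemma f1_closed_neg_far (eta : R) :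
  0 < eta < 1 -> f1_closed eta (sq_coef eta / sq_rate eta) < 0.
Proof.
  intros Heta. pose proof (sq_rate_pos eta Heta). pose proof (sq_coef_pos eta Heta).
  set (M := sq_coef eta / sq_rate eta).
  assert (HM : 0 < M) by (apply Rdiv_lt_0_compat; lra).
  destruct (disp_denom_bounds eta M Heta ltac:(lra)) as [HD HD1].
  assert (1 <= / disp_denom eta M).
  { rewrite <- Rinv_1. apply Rinv_le_contravar; lra. }
  assert (HkM : sq_rate eta * M = sq_coef eta) by (unfold M; field; lra).
  assert (sq_coef eta / (1 + sq_coef eta) ^ 2 < 1).
  { apply Rmult_lt_reg_r with ((1 + sq_coef eta) ^ 2); [nra|].
    unfold Rdiv. rewrite Rmult_assoc, Rinv_l by nra. nra. }
  unfold f1_closed. rewrite HkM. lra.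
Qed.

Lemma f1_closed_neg (eta N : R) :
  0 < eta < 1 -> eta <= / sqrt 2 -> 0 < N -> f1_closed eta N < 0.
Proof.
  intros Heta Hle HN.
  assert (sq_coef eta <= 1).
  { destruct (Rle_or_lt (sq_coef eta) 1) as [| Hgt]; [assumption|].
    apply sq_coef_gt1_iff in Hgt; lra. }
  pose proof (f1_closed_decr eta Heta 0 N ltac:(lra)). rewrite f1_closed_0 in *. lra.
Qed.

Lemma f1_closed_root_exists (eta : R) :
  0 < eta < 1 -> / sqrt 2 < eta -> exists N0, 0 < N0 /\ f1_closed eta N0 = 0.
Proof.
  intros Heta Hgt. apply sq_coef_gt1_iff in Hgt; [|assumption].
  pose proof (sq_rate_pos eta Heta). pose proof (sq_coef_pos eta Heta).
  pose proof (f1_closed_neg_far eta Heta) as Hfar.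
  set (M := sq_coef eta / sq_rate eta) in Hfar.
  assert (HM : 0 < M) by (apply Rdiv_lt_0_compat; lra).
  assert (HF0 : - f1_closed eta 0 < 0) by (rewrite f1_closed_0; lra).
  assert (HFM : 0 < - f1_closed eta M) by lra.
  assert (Hcont : forall t, 0 <= t <= M -> continuity_pt (fun t => - f1_closed eta t) t).
  { intros t Ht. apply continuity_pt_filterlim, (continuous_opp (f1_closed eta)).
    apply f1_closed_continuous; lra. }
  destruct (Ranalysis5.IVT_interv _ 0 M Hcont HM HF0 HFM) as [z [Hz Hfz]].
  exists z. split.
  - destruct (proj1 Hz) as [| <-]; [assumption|]. lra.
  - lra.
Qed.

Lemma is_derive_nonneg_at_right_max (f : R -> R) (a b l : R) :
  a < b -> is_derive f b l -> (forall x, a <= x <= b -> f x <= f b) -> 0 <= l.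
Proof.
  intros Hab Hd Hmax. apply is_derive_Reals in Hd.
  destruct (Rle_or_lt 0 l) as [|Hl]; [assumption | exfalso].
  destruct (Hd (- l / 2)) as [d Hdel]; [lra|].
  pose proof (cond_pos d) as Hd0.
  set (h := - Rmin (d / 2) (b - a)).
  assert (Hmin : 0 < Rmin (d / 2) (b - a) <= b - a /\ Rmin (d / 2) (b - a) <= d / 2)
    by (split; [split; [apply Rmin_pos | apply Rmin_r] | apply Rmin_l]; lra).
  assert (Habs : Rabs h < d)
    by (unfold h; rewrite Rabs_Ropp, Rabs_pos_eq; lra).
  specialize (Hdel h ltac:(unfold h; lra) Habs).
  specialize (Hmax (b + h) ltac:(unfold h; lra)).
  apply Rabs_def2 in Hdel.
  set (q := (f (b + h) - f b) / h) in Hdel.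
  assert (Hqh : q * h = f (b + h) - f b) by (unfold q; field; unfold h; lra).
  assert (h < 0) by (unfold h; lra).
  nra.
Qed.

(* [/ u - ((1 - t) / u ^ 2 + t / v) = (1 - t) ^ 2 (u - 1) / (u ^ 2 v)] with [v = 1 - t + t u]. *)
Lemma inv_interp_le (t u : R) :
  0 <= t <= 1 -> 1 <= u -> (1 - t) / u ^ 2 + t / (1 - t + t * u) <= / u.
Proof.
  intros Ht Hu. assert (Hv : 1 <= 1 - t + t * u) by nra.
  assert (E : / u - ((1 - t) / u ^ 2 + t / (1 - t + t * u))
              = (1 - t) ^ 2 * (u - 1) * / (u ^ 2 * (1 - t + t * u)))
    by (field; split; lra).
  assert (0 <= (1 - t) ^ 2 * (u - 1) * / (u ^ 2 * (1 - t + t * u))).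
  { apply Rmult_le_pos; [apply Rmult_le_pos; [apply pow2_ge_0 | lra] |]. left.
    apply Rinv_0_lt_compat, Rmult_lt_0_compat; [apply pow_lt|]; lra. }
  lra.
Qed.

Lemma one_is_maximizer_iff (eta N : R) :
  0 < eta < 1 -> 0 < N -> (one_is_maximizer eta N <-> 0 <= f1_closed eta N).
Proof.
  intros Heta HN. split.
  - intros Hmax.
    pose proof (is_derive_nonneg_at_right_max _ 0 1 _ Rlt_0_1
                  (is_derive_QFI_1 eta N Heta HN) Hmax).
    nra.
  - intros HF xi Hxi. rewrite !QFI_eq. apply Rmult_le_compat_l; [lra|].
    pose proof (sq_rate_pos eta Heta). pose proof (sq_coef_pos eta Heta) as Hc.
    rewrite Rmult_1_l. unfold f1_closed in HF.
    set (c := sq_coef eta) in *. set (u := 1 + sq_rate eta * N) in *.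
    assert (Hu : 1 <= u) by (unfold u; nra).
    replace (1 + sq_rate eta * (xi * N)) with (1 - xi + xi * u) by (unfold u; ring).
    replace ((1 - 1) / disp_denom eta N + 1 * c / u) with (c * / u) by (unfold Rdiv; ring).
    destruct (disp_denom_bounds eta N Heta ltac:(lra)) as [HDN _].
    pose proof (disp_denom_decr eta (xi * N) N Heta ltac:(nra)).
    assert (Hmono : / disp_denom eta (xi * N) <= / disp_denom eta N)
      by (apply Rinv_le_contravar; lra).
    assert (HFu : / disp_denom eta N <= c / u ^ 2) by lra.
    pose proof (Rmult_le_compat_l _ _ _ (Rlt_le _ _ Hc) (inv_interp_le xi u Hxi Hu)).
    assert ((1 - xi) / disp_denom eta (xi * N) <= (1 - xi) * (c / u ^ 2)).
    { unfold Rdiv at 1. apply Rmult_le_compat_l; lra. }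
    unfold Rdiv in *. lra.
Qed.

Section DecreasingOnHalfLine.

Variable F : R -> R.
Hypothesis F_decr : forall a b, 0 <= a < b -> F b < F a.

Lemma decr_zero_unique (y z : R) : 0 <= y -> 0 <= z -> F y = 0 -> F z = 0 -> y = z.
Proof.
  intros Hy Hz Fy Fz.
  destruct (Rtotal_order y z) as [Hlt | [Heq | Hlt]]; [| assumption |].
  - pose proof (F_decr y z (conj Hy Hlt)). lra.
  - pose proof (F_decr z y (conj Hz Hlt)). lra.
Qed.

Lemma decr_nonneg_iff (x z : R) : 0 <= x -> 0 <= z -> F z = 0 -> (0 <= F x <-> x <= z).
Proof.
  intros Hx Hz Fz. split; intros H.
  - destruct (Rle_or_lt x z) as [| Hlt]; [assumption|].
    pose proof (F_decr z x (conj Hz Hlt)). lra.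
  - destruct H as [Hlt | ->]; [| lra].
    pose proof (F_decr x z (conj Hx Hlt)). lra.
Qed.

End DecreasingOnHalfLine.

Theorem proposition1 (eta : R) :
  0 < eta < 1 ->
  (/ sqrt 2 < eta -> exists! N0 : R, 0 < N0 /\ f1 eta N0 = 0) /\
  (forall Nb : R, Nbar_spec eta Nb ->
     forall NS : R, 0 < NS -> (one_is_maximizer eta NS <-> NS <= Nb)).
Proof.
  intros Heta. pose proof (f1_closed_decr eta Heta) as Hdecr. split.
  - intros Hgt. destruct (f1_closed_root_exists eta Heta Hgt) as [z [Hz Fz]].
    exists z. split.
    + rewrite f1_eq by lra. split; assumption.
    + intros y [Hy Fy]. rewrite f1_eq in Fy by lra.
      apply (decr_zero_unique _ Hdecr); lra.
  - intros Nb Hspec NS HNS. rewrite one_is_maximizer_iff by lra.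
    destruct Hspec as [[Hle ->] | [_ [HNb Fb]]].
    + pose proof (f1_closed_neg eta NS Heta Hle HNS). lra.
    + rewrite f1_eq in Fb by lra. apply (decr_nonneg_iff _ Hdecr); lra.
Qed.
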